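(* Let $\epsilon>0$ and let $Q$ be the angle variable described in the context, defined on $\mathbb{R}^2\setminus\{(0,0)\}$ with values in $\mathbb{R}/2\pi\mathbb{Z}$. Then the level set $\{x=0\}$ in the $(x,v)$-plane equals $\{Q=\frac{\pi}{2}\}\cup\{Q=-\frac{\pi}{2}\}\cup\{(x,v)=(0,0)\}$.
   Context: Let $\Phi(x)=\frac{x^2}{2}+\frac{\epsilon x^4}{2}$ and $H(x,v)=\frac{v^2}{2}+\Phi(x)$. For $(x,v)\neq(0,0)$ define the angle $\chi\in\mathbb{R}/2\pi\mathbb{Z}$ by $\chi=\arcsin\big(v/\sqrt{2H}\big)$ if $x>0$ and $\chi=\pi-\arcsin\big(v/\sqrt{2H}\big)$ if $x\leq 0$; then $(x,v)\mapsto(\chi,H)$ is a bijection onto $(\mathbb{R}/2\pi\mathbb{Z})\times(0,\infty)$, and we write $x=x(\chi,H)$. Set $a(\chi,H)=\sqrt{2}\,\frac{1+2\epsilon x^2}{\sqrt{1+\epsilon x^2}}$ with $x=x(\chi,H)$. Define $c(H)>0$ by $c(H)\int_0^{2\pi}\frac{\mathrm{d}\chi}{a(\chi,H)}=2\pi$, and $Q(\chi,H)=c(H)\int_0^{\chi}\frac{\mathrm{d}\chi'}{a(\chi',H)}$ (well defined modulo $2\pi$). *)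

From Stdlib Require Import Reals ClassicalEpsilon.
From Coquelicot Require Import Coquelicot.
Open Scope R_scope.

Definition Phi (eps x : R) : R := x ^ 2 / 2 + eps * x ^ 4 / 2.
Definition Hen (eps x v : R) : R := v ^ 2 / 2 + Phi eps x.

(* A real representative of the angle chi(x,v) in R/2piZ *)
Definition chi_of (eps x v : R) : R :=
  if Rlt_dec 0 x then asin (v / sqrt (2 * Hen eps x v))
  else PI - asin (v / sqrt (2 * Hen eps x v)).

Definition cong2pi (a b : R) : Prop := exists k : Z, a - b = 2 * PI * IZR k.

(* x = x(chi, H): the x-coordinate of the (unique, by the bijection of the
   context) point (x,v) <> (0,0) with angle chi (mod 2 pi) and energy H. *)
Definition x_of (eps chi H : R) : R :=
  epsilon (inhabits 0) (fun x => exists v, (x, v) <> (0, 0) /\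
     Hen eps x v = H /\ cong2pi (chi_of eps x v) chi).

Definition a_fun (eps chi H : R) : R :=
  let x := x_of eps chi H in
  sqrt 2 * (1 + 2 * eps * x ^ 2) / sqrt (1 + eps * x ^ 2).

Definition c_fun (eps H : R) : R :=
  2 * PI / RInt (fun t => / a_fun eps t H) 0 (2 * PI).

Definition Q_fun (eps chi H : R) : R :=
  c_fun eps H * RInt (fun t => / a_fun eps t H) 0 chi.

(* Q as a function of (x,v) (meaningful modulo 2 pi, for (x,v) <> (0,0)) *)
Definition Q_xv (eps x v : R) : R := Q_fun eps (chi_of eps x v) (Hen eps x v).

From Stdlib Require Import Reals ClassicalEpsilon Lra Lia Psatz FunctionalExtensionality.
From Coquelicot Require Import Coquelicot.
Open Scope R_scope.

(* Since [x(chi, H) ^ 2] is the nonnegative root of [eps y ^ 2 + y = 2 H cos(chi) ^ 2], the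
   integrand [1 / a(chi, H)] depends on [chi] only through [cos(chi) ^ 2]: it is positive,
   even and symmetric about [PI / 2], so it has the same integral over every quarter turn.
   Hence [Q(., H)] is strictly increasing and fixes [- PI / 2], [PI / 2] and [3 PI / 2].
   The punctured line [x = 0] is [chi = PI / 2] ([v > 0]) together with [chi = 3 PI / 2]
   ([v < 0]), where [Q] equals [PI / 2] and [3 PI / 2 = - PI / 2 (mod 2 PI)]; off that line
   [chi] lies in [(- PI / 2, 3 PI / 2)] minus [PI / 2], where [Q] is never congruent to
   [PI / 2] or [- PI / 2]. *)

Lemma cos_cong2pi (a b : R) : cong2pi a b -> cos a = cos b.
Proof.
  intros [k hk].
  assert (hsin : sin (2 * PI * IZR k) = 0).
  { apply sin_eq_0_1. exists (2 * k)%Z. rewrite mult_IZR. ring. }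
  assert (hcos : cos (2 * PI * IZR k) = 1).
  { replace (2 * PI * IZR k) with (2 * (IZR k * PI)) by ring.
    rewrite cos_2a_sin, (sin_eq_0_1 (IZR k * PI)) by (exists k; ring). ring. }
  replace a with (b + 2 * PI * IZR k) by lra.
  rewrite cos_plus, hsin, hcos. ring.
Qed.

Lemma cong2pi_of_sin_cos (a b : R) : sin a = sin b -> cos a = cos b -> cong2pi a b.
Proof.
  intros hs hc.
  assert (hcos_diff : cos (2 * ((a - b) / 2)) = 1).
  { replace (2 * ((a - b) / 2)) with (a - b) by field.
    rewrite cos_minus, hs, hc. pose proof (sin2_cos2 b) as h. unfold Rsqr in h. lra. }
  rewrite cos_2a_sin in hcos_diff.
  destruct (sin_eq_0_0 ((a - b) / 2)) as [k hk]; [nra|].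
  exists k. lra.
Qed.

Lemma cong2pi_eq (a b : R) : Rabs (a - b) < 2 * PI -> cong2pi a b -> a = b.
Proof.
  intros hab [k hk].
  rewrite hk, Rabs_mult, (Rabs_pos_eq (2 * PI)) in hab by (pose proof PI_RGT_0; lra).
  assert (hk0 : (Z.abs k < 1)%Z).
  { apply lt_IZR. rewrite abs_IZR. pose proof PI_RGT_0. nra. }
  replace k with 0%Z in hk by lia. lra.
Qed.

(* The nonnegative root [y] of [eps y ^ 2 + y = 2 q], i.e. the value of [x ^ 2] on the level
   set [Phi eps x = q]. *)
Definition xsq_of_Phi (eps q : R) : R := (-1 + sqrt (1 + 8 * eps * q)) / (2 * eps).

Lemma Phi_sq (eps x : R) : Phi eps x = (x ^ 2 + eps * (x ^ 2) ^ 2) / 2.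
Proof. unfold Phi. field. Qed.

Lemma xsq_of_Phi_ge0 (eps q : R) : 0 < eps -> 0 <= q -> 0 <= xsq_of_Phi eps q.
Proof.
  intros heps hq. unfold xsq_of_Phi.
  assert (1 <= sqrt (1 + 8 * eps * q)).
  { rewrite <- sqrt_1 at 1. apply sqrt_le_1_alt. nra. }
  apply Rmult_le_pos; [lra | apply Rlt_le, Rinv_0_lt_compat; lra].
Qed.

Lemma Phi_eq_iff (eps q x : R) : 0 < eps -> 0 <= q ->
  Phi eps x = q <-> x ^ 2 = xsq_of_Phi eps q.
Proof.
  intros heps hq. rewrite Phi_sq. unfold xsq_of_Phi.
  assert (hx2 := pow2_ge_0 x). split.
  - intros hPhi.
    replace (1 + 8 * eps * q) with ((2 * eps * x ^ 2 + 1) ^ 2) by (rewrite <- hPhi; field).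
    rewrite sqrt_pow2 by nra. field. lra.
  - intros ->.
    assert (hsqrt := pow2_sqrt (1 + 8 * eps * q) ltac:(nra)).
    field_simplify; [| lra]. rewrite hsqrt. field. lra.
Qed.

Lemma Phi_ge0 (eps x : R) : 0 < eps -> 0 <= Phi eps x.
Proof.
  intros heps. rewrite Phi_sq.
  assert (0 <= eps * (x ^ 2) ^ 2) by (apply Rmult_le_pos; [lra | apply pow2_ge_0]).
  assert (hx2 := pow2_ge_0 x). lra.
Qed.

Lemma Phi_gt0 (eps x : R) : 0 < eps -> x <> 0 -> 0 < Phi eps x.
Proof.
  intros heps hx. rewrite Phi_sq.
  assert (0 <= eps * (x ^ 2) ^ 2) by (apply Rmult_le_pos; [lra | apply pow2_ge_0]).
  assert (hx2 := pow2_gt_0 x hx). lra.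
Qed.

Lemma Hen_gt0 (eps x v : R) : 0 < eps -> (x, v) <> (0, 0) -> 0 < Hen eps x v.
Proof.
  intros heps hxv. unfold Hen.
  destruct (Req_dec x 0) as [-> | hx].
  - assert (hv : v <> 0) by (intros ->; auto).
    assert (hv2 := pow2_gt_0 v hv). unfold Phi. simpl. lra.
  - assert (hPhi := Phi_gt0 eps x heps hx). assert (hv2 := pow2_ge_0 v). lra.
Qed.

Lemma sin_chi_of_bound (eps x v : R) : 0 < eps -> (x, v) <> (0, 0) ->
  -1 <= v / sqrt (2 * Hen eps x v) <= 1.
Proof.
  intros heps hxv.
  assert (hH := Hen_gt0 eps x v heps hxv).
  assert (hsqrt : 0 < sqrt (2 * Hen eps x v)) by (apply sqrt_lt_R0; lra).
  assert (hsq := pow2_sqrt (2 * Hen eps x v) ltac:(lra)).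
  assert (hv2 : v ^ 2 <= 2 * Hen eps x v).
  { assert (hPhi := Phi_ge0 eps x heps). unfold Hen. lra. }
  set (s := sqrt (2 * Hen eps x v)) in *.
  assert (hdiv : v / s * s = v) by (field; lra).
  split; apply Rmult_le_reg_r with s; nra.
Qed.

Lemma sin_chi_of (eps x v : R) : 0 < eps -> (x, v) <> (0, 0) ->
  sin (chi_of eps x v) = v / sqrt (2 * Hen eps x v).
Proof.
  intros heps hxv. assert (hs := sin_chi_of_bound eps x v heps hxv).
  unfold chi_of. destruct (Rlt_dec 0 x); rewrite ?sin_PI_x; apply sin_asin; exact hs.
Qed.

Lemma cos_chi_of_sqr (eps x v : R) : 0 < eps -> (x, v) <> (0, 0) ->
  Hen eps x v * cos (chi_of eps x v) ^ 2 = Phi eps x.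
Proof.
  intros heps hxv.
  assert (hH := Hen_gt0 eps x v heps hxv).
  assert (hsqrt := pow2_sqrt (2 * Hen eps x v) ltac:(lra)).
  assert (hsc := sin2_cos2 (chi_of eps x v)). unfold Rsqr in hsc.
  replace (cos (chi_of eps x v) ^ 2) with (1 - sin (chi_of eps x v) ^ 2) by lra.
  rewrite sin_chi_of by assumption.
  unfold Rdiv. rewrite Rpow_mult_distr, pow_inv, hsqrt.
  replace (Phi eps x) with (Hen eps x v - v ^ 2 / 2) by (unfold Hen; field).
  field. lra.
Qed.

Lemma cos_chi_of_ge0 (eps x v : R) : 0 < x -> 0 <= cos (chi_of eps x v).
Proof.
  intros hx. unfold chi_of. destruct (Rlt_dec 0 x) as [_ | nx]; [| lra].
  destruct (asin_bound (v / sqrt (2 * Hen eps x v))). apply cos_ge_0; assumption.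
Qed.

Lemma cos_chi_of_le0 (eps x v : R) : x <= 0 -> cos (chi_of eps x v) <= 0.
Proof.
  intros hx. unfold chi_of. destruct (Rlt_dec 0 x) as [px | _]; [lra |].
  destruct (asin_bound (v / sqrt (2 * Hen eps x v))). apply cos_le_0; lra.
Qed.

Lemma chi_of_bounds (eps x v : R) : - (PI / 2) <= chi_of eps x v <= 3 * (PI / 2).
Proof.
  unfold chi_of. destruct (asin_bound (v / sqrt (2 * Hen eps x v))).
  destruct (Rlt_dec 0 x); lra.
Qed.

Lemma chi_of_off_axis (eps x v : R) : 0 < eps -> x <> 0 ->
  - (PI / 2) < chi_of eps x v < 3 * (PI / 2) /\ chi_of eps x v <> PI / 2.
Proof.
  intros heps hx.
  assert (hxv : (x, v) <> (0, 0)) by congruence.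
  assert (hcos : cos (chi_of eps x v) <> 0).
  { intros hc. assert (h := cos_chi_of_sqr eps x v heps hxv).
    rewrite hc in h. assert (hPhi := Phi_gt0 eps x heps hx). simpl in h. lra. }
  destruct (chi_of_bounds eps x v) as [lo hi].
  repeat split.
  - destruct lo as [lo | lo]; [exact lo |]. rewrite <- lo, cos_neg, cos_PI2 in hcos. easy.
  - destruct hi as [hi | hi]; [exact hi |]. rewrite hi, cos_3PI2 in hcos. easy.
  - intros e. rewrite e, cos_PI2 in hcos. easy.
Qed.

Lemma chi_of_axis_pos (eps v : R) : 0 < v -> chi_of eps 0 v = PI / 2.
Proof.
  intros hv. unfold chi_of. destruct (Rlt_dec 0 0) as [h | _]; [lra |].
  replace (2 * Hen eps 0 v) with (v ^ 2) by (unfold Hen, Phi; field).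
  rewrite sqrt_pow2, Rdiv_diag, asin_1 by lra. field.
Qed.

Lemma chi_of_axis_neg (eps v : R) : v < 0 -> chi_of eps 0 v = 3 * (PI / 2).
Proof.
  intros hv. unfold chi_of. destruct (Rlt_dec 0 0) as [h | _]; [lra |].
  replace (2 * Hen eps 0 v) with ((- v) ^ 2) by (unfold Hen, Phi; field).
  rewrite sqrt_pow2 by lra.
  replace (v / - v) with (- (1)) by (field; lra).
  rewrite asin_opp, asin_1. field.
Qed.

Lemma chi_of_cong2pi (eps x v t : R) : 0 < eps -> (x, v) <> (0, 0) ->
  v = sqrt (2 * Hen eps x v) * sin t -> Phi eps x = Hen eps x v * cos t ^ 2 ->
  0 <= x * cos t -> cong2pi (chi_of eps x v) t.
Proof.
  intros heps hxv hv hPhi hsign.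
  assert (hH := Hen_gt0 eps x v heps hxv).
  apply cong2pi_of_sin_cos.
  - rewrite sin_chi_of, hv at 1 by assumption. field.
    apply Rgt_not_eq, sqrt_lt_R0. lra.
  - assert (hcos2 : cos (chi_of eps x v) ^ 2 = cos t ^ 2).
    { apply Rmult_eq_reg_l with (Hen eps x v); [| lra].
      rewrite cos_chi_of_sqr; assumption. }
    rewrite <- !Rsqr_pow2 in hcos2.
    destruct (Rlt_le_dec 0 x) as [hx | hx].
    + assert (hct : 0 <= cos t) by nra.
      apply Rsqr_inj; [apply cos_chi_of_ge0 | |]; assumption.
    + assert (hct : cos t <= 0).
      { destruct (Req_dec x 0) as [-> | hx0]; [| nra].
        assert (hct2 : cos t ^ 2 = 0).
        { apply Rmult_eq_reg_l with (Hen eps 0 v); [| lra].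
          rewrite <- hPhi. unfold Phi. field. }
        nra. }
      assert (hc := cos_chi_of_le0 eps x v hx).
      apply Ropp_eq_reg, Rsqr_inj; [lra | lra | rewrite <- !Rsqr_neg; exact hcos2].
Qed.

Lemma chi_of_surj (eps t H : R) : 0 < eps -> 0 < H ->
  exists x v, (x, v) <> (0, 0) /\ Hen eps x v = H /\ cong2pi (chi_of eps x v) t.
Proof.
  intros heps hH.
  assert (hq : 0 <= H * cos t ^ 2) by (apply Rmult_le_pos; [lra | apply pow2_ge_0]).
  set (y := xsq_of_Phi eps (H * cos t ^ 2)).
  assert (hsqrt_y := pow2_sqrt y (xsq_of_Phi_ge0 eps _ heps hq)).
  set (x := if Rlt_dec 0 (cos t) then sqrt y else - sqrt y).
  set (v := sqrt (2 * H) * sin t).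
  assert (hPhi : Phi eps x = H * cos t ^ 2).
  { apply Phi_eq_iff; [exact heps | exact hq |]. unfold x.
    destruct (Rlt_dec 0 (cos t)); [| replace ((- sqrt y) ^ 2) with (sqrt y ^ 2) by ring];
      exact hsqrt_y. }
  assert (hsc := sin2_cos2 t). unfold Rsqr in hsc.
  assert (hHen : Hen eps x v = H).
  { unfold Hen, v. rewrite hPhi, Rpow_mult_distr, pow2_sqrt by lra. nra. }
  assert (hxv : (x, v) <> (0, 0)).
  { intros e. injection e as ex ev.
    assert (hPhi0 : Phi eps x = 0) by (rewrite ex; unfold Phi; field).
    assert (hcos : cos t = 0).
    { destruct (Req_dec (cos t) 0) as [c0 | c0]; [exact c0 |].
      assert (hc2 := pow2_gt_0 _ c0). nra. }
    unfold v in ev. apply Rmult_integral in ev. destruct ev as [ev | ev].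
    - assert (0 < sqrt (2 * H)) by (apply sqrt_lt_R0; lra). lra.
    - rewrite hcos, ev in hsc. lra. }
  exists x, v. split; [exact hxv | split; [exact hHen |]].
  apply chi_of_cong2pi; [exact heps | exact hxv | rewrite hHen; reflexivity |
    rewrite hHen; exact hPhi |].
  assert (hsqrt_y_ge0 := sqrt_pos y).
  unfold x. destruct (Rlt_dec 0 (cos t)); nra.
Qed.

Lemma x_of_sqr (eps t H : R) : 0 < eps -> 0 < H ->
  x_of eps t H ^ 2 = xsq_of_Phi eps (H * cos t ^ 2).
Proof.
  intros heps hH. unfold x_of.
  destruct (epsilon_spec (inhabits 0) _ (chi_of_surj eps t H heps hH))
    as [v [hxv [hHen hchi]]].
  set (x := epsilon _ _) in *. clearbody x.
  apply Phi_eq_iff; [exact heps | apply Rmult_le_pos; [lra | apply pow2_ge_0] |].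
  rewrite <- (cos_chi_of_sqr eps x v heps hxv), hHen, (cos_cong2pi _ _ hchi).
  reflexivity.
Qed.

Definition normalized_primitive (g : R -> R) (t : R) : R :=
  2 * PI / RInt g 0 (2 * PI) * RInt g 0 t.

Section QuarterSymmetricIntegrals.

Variable g : R -> R.
Hypothesis g_cont : forall t, continuous g t.
Hypothesis g_pos : forall t, 0 < g t.
Hypothesis g_even : forall t, g (- t) = g t.
Hypothesis g_PI_minus : forall t, g (PI - t) = g t.

Lemma ex_RInt_g (a b : R) : ex_RInt g a b.
Proof. apply (@ex_RInt_continuous R_CompleteNormedModule). intros; apply g_cont. Qed.

Lemma RInt_g_Chasles (a b c : R) : RInt g a b + RInt g b c = RInt g a c.
Proof. apply (RInt_Chasles g); apply ex_RInt_g. Qed.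

Lemma RInt_g_gt0 (a b : R) : a < b -> 0 < RInt g a b.
Proof.
  intros hab. apply RInt_gt_0; [exact hab | intros; apply g_pos | intros; apply g_cont].
Qed.

Lemma RInt_g_reflect (c a b : R) : (forall t, g (c - t) = g t) ->
  RInt g (c - b) (c - a) = RInt g a b.
Proof.
  intros g_sym.
  replace (c - b) with (-1 * b + c) by ring. replace (c - a) with (-1 * a + c) by ring.
  rewrite <- RInt_comp_lin by (apply ex_RInt_g).
  rewrite (RInt_ext _ (fun t => opp (g t))).
  - rewrite (@RInt_opp R_CompleteNormedModule), <- opp_RInt_swap by apply ex_RInt_g.
    apply opp_opp.
  - intros t _. rewrite <- (g_sym t).
    replace (-1 * t + c) with (c - t) by ring.
    unfold scal, opp. simpl. unfold mult. simpl. ring.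
Qed.

Lemma RInt_g_opp (a b : R) : RInt g (- b) (- a) = RInt g a b.
Proof.
  rewrite <- (RInt_g_reflect 0 a b); [f_equal; ring |].
  intros t. rewrite Rminus_0_l. apply g_even.
Qed.

Lemma RInt_g_PI_minus (a b : R) : RInt g (PI - b) (PI - a) = RInt g a b.
Proof. exact (RInt_g_reflect PI a b g_PI_minus). Qed.

Lemma RInt_g_neg_quarter : RInt g (- (PI / 2)) 0 = RInt g 0 (PI / 2).
Proof. rewrite <- (RInt_g_opp 0 (PI / 2)). f_equal. ring. Qed.

Lemma RInt_g_second_quarter : RInt g (PI / 2) PI = RInt g 0 (PI / 2).
Proof. rewrite <- (RInt_g_PI_minus 0 (PI / 2)). f_equal; field. Qed.

Lemma RInt_g_third_quarter : RInt g PI (3 * (PI / 2)) = RInt g 0 (PI / 2).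
Proof.
  rewrite <- RInt_g_neg_quarter, <- (RInt_g_PI_minus (- (PI / 2)) 0). f_equal; field.
Qed.

Lemma RInt_g_fourth_quarter : RInt g (3 * (PI / 2)) (2 * PI) = RInt g 0 (PI / 2).
Proof.
  rewrite <- RInt_g_second_quarter, <- (RInt_g_opp (PI / 2) PI),
    <- (RInt_g_PI_minus (- PI) (- (PI / 2))).
  f_equal; field.
Qed.

Lemma RInt_g_three_quarters : RInt g 0 (3 * (PI / 2)) = 3 * RInt g 0 (PI / 2).
Proof.
  rewrite <- (RInt_g_Chasles 0 PI), <- (RInt_g_Chasles 0 (PI / 2) PI),
    RInt_g_second_quarter, RInt_g_third_quarter.
  lra.
Qed.

Lemma RInt_g_full_turn : RInt g 0 (2 * PI) = 4 * RInt g 0 (PI / 2).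
Proof.
  rewrite <- (RInt_g_Chasles 0 (3 * (PI / 2))), RInt_g_three_quarters, RInt_g_fourth_quarter.
  lra.
Qed.

Lemma RInt_g_0_neg_quarter : RInt g 0 (- (PI / 2)) = - RInt g 0 (PI / 2).
Proof.
  rewrite <- RInt_g_neg_quarter, <- opp_RInt_swap by apply ex_RInt_g. reflexivity.
Qed.

Lemma normalized_primitiveE (t : R) :
  normalized_primitive g t = PI / 2 * (RInt g 0 t / RInt g 0 (PI / 2)).
Proof.
  assert (hJ := RInt_g_gt0 0 (PI / 2) ltac:(pose proof PI_RGT_0; lra)).
  unfold normalized_primitive. rewrite RInt_g_full_turn. field. lra.
Qed.

Lemma normalized_primitive_lt (a b : R) :
  a < b -> normalized_primitive g a < normalized_primitive g b.
Proof.
  intros hab. rewrite !normalized_primitiveE, <- (RInt_g_Chasles 0 a b).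
  assert (hJ := RInt_g_gt0 0 (PI / 2) ltac:(pose proof PI_RGT_0; lra)).
  assert (hab' := RInt_g_gt0 a b hab).
  apply Rmult_lt_compat_l; [pose proof PI_RGT_0; lra |].
  unfold Rdiv. apply Rmult_lt_compat_r; [apply Rinv_0_lt_compat |]; lra.
Qed.

Lemma normalized_primitive_quarter : normalized_primitive g (PI / 2) = PI / 2.
Proof.
  assert (hJ := RInt_g_gt0 0 (PI / 2) ltac:(pose proof PI_RGT_0; lra)).
  rewrite normalized_primitiveE. field. lra.
Qed.

Lemma normalized_primitive_neg_quarter : normalized_primitive g (- (PI / 2)) = - (PI / 2).
Proof.
  assert (hJ := RInt_g_gt0 0 (PI / 2) ltac:(pose proof PI_RGT_0; lra)).
  rewrite normalized_primitiveE, RInt_g_0_neg_quarter. field. lra.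
Qed.

Lemma normalized_primitive_three_quarters :
  normalized_primitive g (3 * (PI / 2)) = 3 * (PI / 2).
Proof.
  assert (hJ := RInt_g_gt0 0 (PI / 2) ltac:(pose proof PI_RGT_0; lra)).
  rewrite normalized_primitiveE, RInt_g_three_quarters. field. lra.
Qed.

End QuarterSymmetricIntegrals.

Definition a_of_xsq (eps y : R) : R := sqrt 2 * (1 + 2 * eps * y) / sqrt (1 + eps * y).

Definition inv_a_cos2 (eps H t : R) : R := / a_of_xsq eps (xsq_of_Phi eps (H * cos t ^ 2)).

Lemma inv_a_funE (eps t H : R) : 0 < eps -> 0 < H -> / a_fun eps t H = inv_a_cos2 eps H t.
Proof.
  intros heps hH. unfold a_fun, inv_a_cos2, a_of_xsq. rewrite x_of_sqr by assumption.
  reflexivity.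
Qed.

Lemma a_of_xsq_gt0 (eps y : R) : 0 < eps -> 0 <= y -> 0 < a_of_xsq eps y.
Proof.
  intros heps hy. unfold a_of_xsq.
  assert (0 < sqrt 2) by (apply sqrt_lt_R0; lra).
  assert (0 < sqrt (1 + eps * y)) by (apply sqrt_lt_R0; nra).
  apply Rdiv_lt_0_compat; [apply Rmult_lt_0_compat |]; nra.
Qed.

Lemma inv_a_cos2_gt0 (eps H t : R) : 0 < eps -> 0 <= H -> 0 < inv_a_cos2 eps H t.
Proof.
  intros heps hH. apply Rinv_0_lt_compat, a_of_xsq_gt0; [exact heps |].
  apply xsq_of_Phi_ge0; [exact heps | apply Rmult_le_pos; [exact hH | apply pow2_ge_0]].
Qed.

Lemma inv_a_cos2_opp (eps H t : R) : inv_a_cos2 eps H (- t) = inv_a_cos2 eps H t.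
Proof. unfold inv_a_cos2. rewrite cos_neg. reflexivity. Qed.

Lemma inv_a_cos2_PI_minus (eps H t : R) : inv_a_cos2 eps H (PI - t) = inv_a_cos2 eps H t.
Proof.
  unfold inv_a_cos2. rewrite Rtrigo_facts.cos_pi_minus.
  replace ((- cos t) ^ 2) with (cos t ^ 2) by ring. reflexivity.
Qed.

Lemma continuous_inv_a_cos2 (eps H t : R) : 0 < eps -> 0 <= H ->
  continuous (inv_a_cos2 eps H) t.
Proof.
  intros heps hH. apply (ex_derive_continuous (inv_a_cos2 eps H)).
  assert (hq : 0 <= H * cos t ^ 2) by (apply Rmult_le_pos; [exact hH | apply pow2_ge_0]).
  assert (hy := xsq_of_Phi_ge0 eps _ heps hq).
  assert (ha := a_of_xsq_gt0 eps _ heps hy).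
  unfold inv_a_cos2, a_of_xsq, xsq_of_Phi in *. auto_derive.
  replace (cos t * (cos t * 1)) with (cos t ^ 2) by ring. unfold Rdiv in *.
  set (y := (-1 + sqrt (1 + 8 * eps * (H * cos t ^ 2))) * / (2 * eps)) in *.
  assert (hy1 : 0 < 1 + eps * y) by nra.
  repeat split; try nra.
  apply Rgt_not_eq, sqrt_lt_R0, hy1.
Qed.

Lemma Q_fun_normalized (eps H chi : R) : 0 < eps -> 0 < H ->
  Q_fun eps chi H = normalized_primitive (inv_a_cos2 eps H) chi.
Proof.
  intros heps hH. unfold Q_fun, c_fun, normalized_primitive.
  replace (fun t => / a_fun eps t H) with (inv_a_cos2 eps H); [reflexivity |].
  apply functional_extensionality. intros t. symmetry. apply inv_a_funE; assumption.
Qed.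

Ltac inv_a_cos2_quarter_symmetric :=
  intros; auto using continuous_inv_a_cos2, inv_a_cos2_gt0, inv_a_cos2_opp,
    inv_a_cos2_PI_minus, Rlt_le.

Lemma Q_fun_lt (eps H a b : R) : 0 < eps -> 0 < H -> a < b ->
  Q_fun eps a H < Q_fun eps b H.
Proof.
  intros heps hH hab. rewrite !Q_fun_normalized by assumption.
  apply normalized_primitive_lt; inv_a_cos2_quarter_symmetric.
Qed.

Lemma Q_fun_quarter (eps H : R) : 0 < eps -> 0 < H -> Q_fun eps (PI / 2) H = PI / 2.
Proof.
  intros heps hH. rewrite Q_fun_normalized by assumption.
  apply normalized_primitive_quarter; inv_a_cos2_quarter_symmetric.
Qed.

Lemma Q_fun_neg_quarter (eps H : R) : 0 < eps -> 0 < H ->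
  Q_fun eps (- (PI / 2)) H = - (PI / 2).
Proof.
  intros heps hH. rewrite Q_fun_normalized by assumption.
  apply normalized_primitive_neg_quarter; inv_a_cos2_quarter_symmetric.
Qed.

Lemma Q_fun_three_quarters (eps H : R) : 0 < eps -> 0 < H ->
  Q_fun eps (3 * (PI / 2)) H = 3 * (PI / 2).
Proof.
  intros heps hH. rewrite Q_fun_normalized by assumption.
  apply normalized_primitive_three_quarters; inv_a_cos2_quarter_symmetric.
Qed.

Lemma Q_xv_axis_pos (eps v : R) : 0 < eps -> 0 < v -> Q_xv eps 0 v = PI / 2.
Proof.
  intros heps hv. unfold Q_xv. rewrite chi_of_axis_pos by exact hv.
  apply Q_fun_quarter; [exact heps |].
  apply Hen_gt0; [exact heps | intros e; injection e; lra].
Qed.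

Lemma Q_xv_axis_neg (eps v : R) : 0 < eps -> v < 0 -> Q_xv eps 0 v = 3 * (PI / 2).
Proof.
  intros heps hv. unfold Q_xv. rewrite chi_of_axis_neg by exact hv.
  apply Q_fun_three_quarters; [exact heps |].
  apply Hen_gt0; [exact heps | intros e; injection e; lra].
Qed.

Lemma Q_xv_off_axis (eps x v : R) : 0 < eps -> x <> 0 ->
  - (PI / 2) < Q_xv eps x v < 3 * (PI / 2) /\ Q_xv eps x v <> PI / 2.
Proof.
  intros heps hx. unfold Q_xv.
  assert (hH : 0 < Hen eps x v) by (apply Hen_gt0; [exact heps | congruence]).
  destruct (chi_of_off_axis eps x v heps hx) as [[lo hi] hne].
  rewrite <- (Q_fun_neg_quarter eps _ heps hH) at 1.
  rewrite <- (Q_fun_three_quarters eps _ heps hH) at 1.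
  split; [split; apply Q_fun_lt; assumption |].
  rewrite <- (Q_fun_quarter eps _ heps hH).
  destruct (Rdichotomy _ _ hne) as [lt | gt].
  - apply Rlt_not_eq, Q_fun_lt; assumption.
  - apply Rgt_not_eq, Q_fun_lt; assumption.
Qed.

Theorem lemma5p2 (eps : R) (heps : 0 < eps) (x v : R) :
  x = 0 <->
  (((x, v) <> (0, 0) /\ cong2pi (Q_xv eps x v) (PI / 2))
   \/ ((x, v) <> (0, 0) /\ cong2pi (Q_xv eps x v) (- (PI / 2)))
   \/ (x, v) = (0, 0)).
Proof.
  split.
  - intros ->. destruct (Rtotal_order v 0) as [hv | [-> | hv]].
    + right; left. split; [intros e; injection e; lra |].
      rewrite Q_xv_axis_neg by assumption. exists 1%Z. lra.
    + right; right. reflexivity.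
    + left. split; [intros e; injection e; lra |].
      rewrite Q_xv_axis_pos by assumption. exists 0%Z. lra.
  - intros hQ. destruct (Req_dec x 0) as [hx | hx]; [exact hx | exfalso].
    destruct (Q_xv_off_axis eps x v heps hx) as [[lo hi] hne].
    pose proof PI_RGT_0.
    destruct hQ as [[_ hc] | [[_ hc] | e]].
    + apply hne, cong2pi_eq; [apply Rabs_def1; lra | exact hc].
    + apply cong2pi_eq in hc; [lra | apply Rabs_def1; lra].
    + injection e. congruence.
Qed.
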